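(* Let $(A^1,B^1)$ be an $n_1\times m_1$ bimatrix game, $(A^2,B^2)$ an $n_2\times m_2$ bimatrix game, $K$ a real number with $K>|c|$ for every entry $c$ of $A^1,B^1,A^2,B^2$, and let $(A,B)$ be the sum game $(A^1,B^1)+(A^2,B^2)$ via $K$. If $(x,y)$ is a Nash equilibrium of $(A,B)$, then $0<\sum_{i=1}^{n_1}x_i<1$ and $0<\sum_{j=1}^{m_1}y_j<1$.
   Context: An $n\times m$ bimatrix game $(A,B)$ consists of two real $n\times m$ matrices. A mixed strategy of the row player is a probability vector $x\in\Delta_n=\{x\in\mathbb{R}^n_{\ge 0}:\sum_i x_i=1\}$, of the column player $y\in\Delta_m$; the expected payoffs are $x^TAy$ (row player) and $x^TBy$ (column player). $(x,y)$ is a Nash equilibrium if $x^TAy\ge \hat x^TAy$ for all $\hat x\in\Delta_n$ and $x^TBy\ge x^TB\hat y$ for all $\hat y\in\Delta_m$. The sum game $(A^1,B^1)+(A^2,B^2)$ via $K$ is the $(n_1+n_2)\times(m_1+m_2)$ game $(A,B)$ with $A_{ij}=A^1_{ij}$, $B_{ij}=B^1_{ij}$ if $i\le n_1,j\le m_1$; $A_{ij}=A^2_{i-n_1,j-m_1}$, $B_{ij}=B^2_{i-n_1,j-m_1}$ if $i>n_1,j>m_1$; and $A_{ij}=K$, $B_{ij}=-K$ otherwise. *)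

From HB Require Import structures.
From mathcomp Require Import all_boot all_order all_algebra.
Set Implicit Arguments. Unset Strict Implicit. Unset Printing Implicit Defensive.
Import Order.TTheory GRing.Theory Num.Theory.
Local Open Scope ring_scope.

Definition mixed_strategy (R : realFieldType) (n : nat) (x : 'rV[R]_n) : Prop :=
  (forall i, 0 <= x 0 i) /\ \sum_(i < n) x 0 i = 1.

Definition payoff (R : realFieldType) (n m : nat)
  (M : 'M[R]_(n, m)) (x : 'rV[R]_n) (y : 'rV[R]_m) : R :=
  \sum_(i < n) \sum_(j < m) x 0 i * M i j * y 0 j.

Definition nash_eq (R : realFieldType) (n m : nat) (A B : 'M[R]_(n, m))
  (x : 'rV[R]_n) (y : 'rV[R]_m) : Prop :=
  mixed_strategy x /\ mixed_strategy y /\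
  (forall xh : 'rV[R]_n, mixed_strategy xh -> payoff A xh y <= payoff A x y) /\
  (forall yh : 'rV[R]_m, mixed_strategy yh -> payoff B x yh <= payoff B x y).

Definition sum_entry (R : realFieldType) (n1 m1 n2 m2 : nat)
  (M1 : 'M[R]_(n1, m1)) (M2 : 'M[R]_(n2, m2)) (c : R)
  (i : 'I_(n1 + n2)) (j : 'I_(m1 + m2)) : R :=
  match split i, split j with
  | inl i1, inl j1 => M1 i1 j1
  | inr i2, inr j2 => M2 i2 j2
  | _, _ => c
  end.

Definition sum_game_A (R : realFieldType) (n1 m1 n2 m2 : nat)
  (A1 : 'M[R]_(n1, m1)) (A2 : 'M[R]_(n2, m2)) (K : R) : 'M[R]_(n1 + n2, m1 + m2) :=
  \matrix_(i, j) sum_entry A1 A2 K i j.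

Definition sum_game_B (R : realFieldType) (n1 m1 n2 m2 : nat)
  (B1 : 'M[R]_(n1, m1)) (B2 : 'M[R]_(n2, m2)) (K : R) : 'M[R]_(n1 + n2, m1 + m2) :=
  \matrix_(i, j) sum_entry B1 B2 (- K) i j.

(* Since K exceeds every in-block payoff of the row player, a column strategy
   living on one block makes every row of the other block strictly better, so
   the row player abandons the first block; dually, -K is below every in-block
   payoff of the column player, so a row strategy living on one block drives the
   column player into that same block.  Chaining these, an equilibrium that left
   a block unused would leave both blocks of some player unused, contradicting
   that mixed strategies sum to 1. *)
From HB Require Import structures.
From mathcomp Require Import all_boot all_order all_algebra.
Import Order.TTheory GRing.Theory Num.Theory.
Local Open Scope ring_scope.

Section WeightedSums.
Context {R : realFieldType} {I : finType} {w : I -> R}.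
Hypotheses (w_ge0 : forall i, 0 <= w i) (w_sum1 : \sum_i w i = 1).

Lemma weighted_sum_lt (a : I -> R) (c : R) :
  (forall i, a i < c) -> \sum_i a i * w i < c.
Proof.
move=> a_lt; have w_sum_neq0 : \sum_i w i <> 0 by rewrite w_sum1; apply/eqP/oner_neq0.
have [i0 /andP [_ w_i0_gt0]] := psumr_neq0P (fun i _ => w_ge0 i) w_sum_neq0.
rewrite -[c]mulr1 -w_sum1 mulr_sumr (bigD1 i0) //= [X in _ < X](bigD1 i0) //=.
apply: ltr_leD; first by rewrite ltr_pM2r.
by apply: ler_sum => i _; rewrite ler_wpM2r // ltW.
Qed.

Lemma weighted_sum_gt (a : I -> R) (c : R) :
  (forall i, c < a i) -> c < \sum_i a i * w i.
Proof.
move=> a_gt; rewrite -ltrN2 -sumrN.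
by under eq_bigr do rewrite -mulNr; apply: weighted_sum_lt => i; rewrite ltrN2.
Qed.

End WeightedSums.

Definition best_response {R : realFieldType} {n : nat} (x : 'rV[R]_n) (u : 'I_n -> R) :=
  forall xh, mixed_strategy xh -> \sum_k xh 0 k * u k <= \sum_k x 0 k * u k.

Section BestResponse.
Context {R : realFieldType} {n : nat}.

Lemma mixed_strategy_delta (k : 'I_n) : mixed_strategy (delta_mx 0 k : 'rV[R]_n).
Proof.
split=> [i|]; first by rewrite mxE ler0n.
by rewrite (bigD1 k) //= mxE !eqxx big1 ?addr0 // => i /negPf ik; rewrite mxE ik andbF.
Qed.

Lemma eq_best_response (x : 'rV[R]_n) (u v : 'I_n -> R) :
  u =1 v -> best_response x u -> best_response x v.
Proof.
move=> uv x_best xh /x_best.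
by under eq_bigr do rewrite uv; under [X in _ <= X]eq_bigr do rewrite uv.
Qed.

Lemma sum_delta_mul (k : 'I_n) (u : 'I_n -> R) :
  \sum_i (delta_mx 0 k : 'rV[R]_n) 0 i * u i = u k.
Proof.
rewrite (bigD1 k) //= mxE !eqxx mul1r big1 ?addr0 // => i /negPf ik.
by rewrite mxE ik andbF mul0r.
Qed.

Lemma best_response_zero {x : 'rV[R]_n} {u : 'I_n -> R} {i : 'I_n} (j : 'I_n) :
  mixed_strategy x -> best_response x u -> u i < u j -> x 0 i = 0.
Proof.
move=> [x_ge0 x_sum1] x_best uij.
case: (@arg_maxP _ _ _ j predT u isT) => k _ u_le_k.
have gap_ge0 l : 0 <= x 0 l * (u k - u l)
  by rewrite mulr_ge0 // subr_ge0; apply: u_le_k.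
have gap0 : \sum_l x 0 l * (u k - u l) = 0.
  apply/eqP; rewrite eq_le sumr_ge0 // andbT.
  under eq_bigr do rewrite mulrBr.
  rewrite sumrB -mulr_suml x_sum1 mul1r subr_le0.
  by have := x_best _ (mixed_strategy_delta k); rewrite sum_delta_mul.
have /eqP := @psumr_eq0P _ _ _ _ (fun l _ => gap_ge0 l) gap0 i isT.
rewrite mulf_eq0 subr_eq0 => /orP [/eqP // | /eqP uki].
by have := lt_le_trans uij (u_le_k j isT); rewrite uki ltxx.
Qed.

End BestResponse.

Section Payoff.
Context {R : realFieldType}.

Lemma payoff_row n m (M : 'M[R]_(n, m)) x y :
  payoff M x y = \sum_i x 0 i * \sum_j M i j * y 0 j.
Proof. by apply: eq_bigr => i _; rewrite mulr_sumr; apply: eq_bigr => j _; rewrite mulrA. Qed.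

Lemma payoff_tr n m (M : 'M[R]_(n, m)) x y : payoff M x y = payoff M^T y x.
Proof.
rewrite /payoff [RHS]exchange_big /=; apply: eq_bigr => i _; apply: eq_bigr => j _.
by rewrite mxE [RHS]mulrC mulrA mulrAC.
Qed.

Lemma nash_eq_row_best {n m} {A B : 'M[R]_(n, m)} {x y} :
  nash_eq A B x y -> best_response x (fun i => \sum_j A i j * y 0 j).
Proof. by move=> [_ [_ [A_best _]]] xh /A_best; rewrite !payoff_row. Qed.

Lemma nash_eq_col_best {n m} {A B : 'M[R]_(n, m)} {x y} :
  nash_eq A B x y -> best_response y (fun j => \sum_i B^T j i * x 0 i).
Proof. by move=> [_ [_ [_ B_best]]] yh /B_best; rewrite !(@payoff_tr _ _ B) !payoff_row. Qed.

End Payoff.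

Definition lmass {R : realFieldType} {n1 n2 : nat} (x : 'rV[R]_(n1 + n2)) : R :=
  \sum_(i < n1) x 0 (lshift n2 i).

Definition rmass {R : realFieldType} {n1 n2 : nat} (x : 'rV[R]_(n1 + n2)) : R :=
  \sum_(i < n2) x 0 (rshift n1 i).

Section Masses.
Context {R : realFieldType} {n1 n2 : nat} {x : 'rV[R]_(n1 + n2)}.
Hypothesis mx : mixed_strategy x.

Lemma lmass_ge0 : 0 <= lmass x.
Proof. by apply: sumr_ge0 => i _; apply: mx.1. Qed.

Lemma rmass_ge0 : 0 <= rmass x.
Proof. by apply: sumr_ge0 => i _; apply: mx.1. Qed.

Lemma lmassD_rmass : lmass x + rmass x = 1.
Proof. by rewrite -mx.2 [RHS]big_split_ord. Qed.

Lemma rmass0_lmass1 : rmass x = 0 -> lmass x = 1.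
Proof. by move=> r0; rewrite -lmassD_rmass r0 addr0. Qed.

Lemma lmass0_rmass1 : lmass x = 0 -> rmass x = 1.
Proof. by move=> l0; rewrite -lmassD_rmass l0 add0r. Qed.

Lemma rmass0_rshift i : rmass x = 0 -> x 0 (rshift n1 i) = 0.
Proof. by move=> r0; apply: (psumr_eq0P _ r0) => // j _; apply: mx.1. Qed.

Lemma lmass0_lshift i : lmass x = 0 -> x 0 (lshift n2 i) = 0.
Proof. by move=> l0; apply: (psumr_eq0P _ l0) => // j _; apply: mx.1. Qed.

Lemma lmass_rmass_eq0F : lmass x = 0 -> rmass x = 0 -> False.
Proof. by move=> l0 /rmass0_lmass1; rewrite l0 => /eqP; rewrite eq_sym oner_eq0. Qed.

Lemma lmass_bounds : lmass x != 0 -> rmass x != 0 -> 0 < lmass x < 1.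
Proof.
move=> l_neq0 r_neq0; have r_gt0 : 0 < rmass x by rewrite lt_def r_neq0 rmass_ge0.
by rewrite lt_def l_neq0 lmass_ge0 -lmassD_rmass ltrDl.
Qed.

End Masses.

Lemma split_lshift m n (i : 'I_m) : split (lshift n i) = inl i.
Proof. exact: (unsplitK (inl _ i)). Qed.

Lemma split_rshift m n (i : 'I_n) : split (rshift m i) = inr i.
Proof. exact: (unsplitK (inr _ i)). Qed.

Lemma sum_entry_tr (R : realFieldType) n1 m1 n2 m2 (M1 : 'M[R]_(n1, m1))
    (M2 : 'M[R]_(n2, m2)) c i j :
  sum_entry M1 M2 c i j = sum_entry M1^T M2^T c j i.
Proof. by rewrite /sum_entry; case: (split i) => i'; case: (split j) => j'; rewrite ?mxE. Qed.

(* A player of the sum game facing [y], with in-block payoffs [M1], [M2] and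
   off-block payoff [c]; the column player is the instance obtained by
   transposition (see [sum_entry_tr]), with [c = - K]. *)
Section SumGame.
Context {R : realFieldType} {n1 m1 n2 m2 : nat}.
Context {M1 : 'M[R]_(n1, m1)} {M2 : 'M[R]_(n2, m2)} {c : R}.
Context {x : 'rV[R]_(n1 + n2)} {y : 'rV[R]_(m1 + m2)}.
Hypotheses (mx : mixed_strategy x) (my : mixed_strategy y).
Let u i := \sum_j sum_entry M1 M2 c i j * y 0 j.
Hypothesis x_best : best_response x u.

Lemma row_value_lshift i :
  u (lshift n2 i) = \sum_j M1 i j * y 0 (lshift m2 j) + c * rmass y.
Proof.
rewrite /u big_split_ord /rmass mulr_sumr /sum_entry split_lshift.
by congr (_ + _); apply: eq_bigr => j _; rewrite ?split_lshift ?split_rshift.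
Qed.

Lemma row_value_rshift i :
  u (rshift n1 i) = c * lmass y + \sum_j M2 i j * y 0 (rshift m1 j).
Proof.
rewrite /u big_split_ord /lmass mulr_sumr /sum_entry split_rshift.
by congr (_ + _); apply: eq_bigr => j _; rewrite ?split_lshift ?split_rshift.
Qed.

Lemma row_value_rmass0 : rmass y = 0 ->
  (forall i, u (lshift n2 i) = \sum_j M1 i j * y 0 (lshift m2 j)) /\
  (forall i, u (rshift n1 i) = c).
Proof.
move=> r0; split=> i; first by rewrite row_value_lshift r0 mulr0 addr0.
rewrite row_value_rshift (rmass0_lmass1 my r0) mulr1 big1 ?addr0 // => j _.
by rewrite (rmass0_rshift my) ?mulr0.
Qed.

Lemma row_value_lmass0 : lmass y = 0 ->
  (forall i, u (lshift n2 i) = c) /\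
  (forall i, u (rshift n1 i) = \sum_j M2 i j * y 0 (rshift m1 j)).
Proof.
move=> l0; split=> i; last by rewrite row_value_rshift l0 mulr0 add0r.
rewrite row_value_lshift (lmass0_rmass1 my l0) mulr1 big1 ?add0r // => j _.
by rewrite (lmass0_lshift my) ?mulr0.
Qed.

Lemma lmass0_of_rmass0_lt : (0 < n2)%N -> (forall i j, M1 i j < c) ->
  rmass y = 0 -> lmass x = 0.
Proof.
move=> n2_gt0 M1_lt r0; have [uL uR] := row_value_rmass0 r0.
apply: big1 => i _; apply: (best_response_zero (rshift n1 (Ordinal n2_gt0)) mx x_best).
rewrite uL uR; apply: weighted_sum_lt => // [j|]; first exact: my.1.
exact: rmass0_lmass1 my r0.
Qed.

Lemma rmass0_of_lmass0_lt : (0 < n1)%N -> (forall i j, M2 i j < c) ->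
  lmass y = 0 -> rmass x = 0.
Proof.
move=> n1_gt0 M2_lt l0; have [uL uR] := row_value_lmass0 l0.
apply: big1 => i _; apply: (best_response_zero (lshift n2 (Ordinal n1_gt0)) mx x_best).
rewrite uL uR; apply: weighted_sum_lt => // [j|]; first exact: my.1.
exact: lmass0_rmass1 my l0.
Qed.

Lemma rmass0_of_rmass0_gt : (0 < n1)%N -> (forall i j, c < M1 i j) ->
  rmass y = 0 -> rmass x = 0.
Proof.
move=> n1_gt0 M1_gt r0; have [uL uR] := row_value_rmass0 r0.
apply: big1 => i _; apply: (best_response_zero (lshift n2 (Ordinal n1_gt0)) mx x_best).
rewrite uL uR; apply: weighted_sum_gt => // [j|]; first exact: my.1.
exact: rmass0_lmass1 my r0.
Qed.

Lemma lmass0_of_lmass0_gt : (0 < n2)%N -> (forall i j, c < M2 i j) ->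
  lmass y = 0 -> lmass x = 0.
Proof.
move=> n2_gt0 M2_gt l0; have [uL uR] := row_value_lmass0 l0.
apply: big1 => i _; apply: (best_response_zero (rshift n1 (Ordinal n2_gt0)) mx x_best).
rewrite uL uR; apply: weighted_sum_gt => // [j|]; first exact: my.1.
exact: lmass0_rmass1 my l0.
Qed.

End SumGame.

Section SumGameNash.
Context {R : realFieldType} {n1 m1 n2 m2 : nat}.
Context {A1 B1 : 'M[R]_(n1, m1)} {A2 B2 : 'M[R]_(n2, m2)} {K : R}.
Context {x : 'rV[R]_(n1 + n2)} {y : 'rV[R]_(m1 + m2)}.
Hypothesis xy_nash : nash_eq (sum_game_A A1 A2 K) (sum_game_B B1 B2 K) x y.

Lemma sum_game_row_best : best_response x (fun i => \sum_j sum_entry A1 A2 K i j * y 0 j).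
Proof.
apply: eq_best_response (nash_eq_row_best xy_nash) => i.
by apply: eq_bigr => j _; rewrite mxE.
Qed.

Lemma sum_game_col_best :
  best_response y (fun j => \sum_i sum_entry B1^T B2^T (- K) j i * x 0 i).
Proof.
apply: eq_best_response (nash_eq_col_best xy_nash) => j.
by apply: eq_bigr => i _; rewrite !mxE sum_entry_tr.
Qed.

End SumGameNash.

Theorem lemma5 (R : realFieldType) (n1 m1 n2 m2 : nat)
  (A1 B1 : 'M[R]_(n1, m1)) (A2 B2 : 'M[R]_(n2, m2)) (K : R)
  (hn1 : (0 < n1)%N) (hm1 : (0 < m1)%N) (hn2 : (0 < n2)%N) (hm2 : (0 < m2)%N)
  (hK1 : forall i j, `|A1 i j| < K /\ `|B1 i j| < K)
  (hK2 : forall i j, `|A2 i j| < K /\ `|B2 i j| < K)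
  (x : 'rV[R]_(n1 + n2)) (y : 'rV[R]_(m1 + m2)) :
  nash_eq (sum_game_A A1 A2 K) (sum_game_B B1 B2 K) x y ->
  0 < \sum_(i < n1) x 0 (lshift n2 i) < 1 /\
  0 < \sum_(j < m1) y 0 (lshift m2 j) < 1.
Proof.
move=> xy_nash; have [mx [my _]] := xy_nash.
have row := sum_game_row_best xy_nash; have col := sum_game_col_best xy_nash.
have A1_lt i j : A1 i j < K by case: (hK1 i j) => /ltr_normlP [].
have A2_lt i j : A2 i j < K by case: (hK2 i j) => /ltr_normlP [].
have B1_gt i j : - K < B1^T i j by rewrite mxE ltrNl; case: (hK1 j i) => _ /ltr_normlP [].
have B2_gt i j : - K < B2^T i j by rewrite mxE ltrNl; case: (hK2 j i) => _ /ltr_normlP [].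
have x_l := lmass0_of_rmass0_lt mx my row hn2 A1_lt.
have x_r := rmass0_of_lmass0_lt mx my row hn1 A2_lt.
have y_r := rmass0_of_rmass0_gt my mx col hm1 B1_gt.
have y_l := lmass0_of_lmass0_gt my mx col hm2 B2_gt.
split; apply: lmass_bounds => //; apply/eqP.
- by move=> l0; apply: (lmass_rmass_eq0F mx l0 (x_r (y_l l0))).
- by move=> r0; apply: (lmass_rmass_eq0F mx (x_l (y_r r0)) r0).
- by move=> l0; apply: (lmass_rmass_eq0F my l0 (y_r (x_r l0))).
- by move=> r0; apply: (lmass_rmass_eq0F my (y_l (x_l r0)) r0).
Qed.
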